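(* Let $K$ be a field and $|\cdot|:K\to R$ a tempered multiplicative generalized seminorm. Then $K$ has tiny balls for $|\cdot|$.
   Context: A halo is a commutative unital semiring with a partial order compatible with $+$ and $\cdot$; an aura is a halo whose semiring is a semifield; positive means $0<1$. A generalized seminorm is a map $|\cdot|:A\to R$ into a positive totally ordered aura with $|0|=0,|1|=1$, $|a+b|\le|a|+|b|$, $|ab|\le|a||b|$; multiplicative if $|ab|=|a||b|$; tempered if $R$ has tempered growth: for every non-zero $P\in\mathbb{N}[X]$ and $x\in R$, ($x^n\le P(n)$ for all $n\in\mathbb{N}$) implies $x\le1$. For $x,a\in A$ with $|a|>0$, $B(x,|a|)=\{z:|z-x|<|a|\}$. $|\cdot|$ has tiny balls if for every $a$ with $|a|>0$: there is $a'$ with $|a'|>0$ and $B(0,|a'|)+B(0,|a'|)\subset B(0,|a|)$; for every $x\in A$ there is $c$ with $|c|>0$ and $xB(0,|c|)\subset B(0,|a|)$; there is $a'$ with $|a'|>0$ and $B(0,|a'|)B(0,|a'|)\subset B(0,|a|)$; there is $a'$ with $|a'|>0$ and $-B(0,|a'|)\subset B(0,|a|)$. *)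

From mathcomp Require Import all_boot all_order all_algebra.
Set Implicit Arguments. Unset Strict Implicit. Unset Printing Implicit Defensive.
Import GRing.Theory.
Local Open Scope ring_scope.

Definition lt_of (R : Type) (le : R -> R -> Prop) (x y : R) : Prop :=
  le x y /\ x <> y.

Definition is_halo (R : comPzSemiRingType) (le : R -> R -> Prop) : Prop :=
  [/\ (forall x, le x x),
      (forall x y, le x y -> le y x -> x = y),
      (forall x y z, le x y -> le y z -> le x z),
      (forall x y z, le x y -> le (x + z) (y + z)) &
      (forall x y z, le x y -> le (x * z) (y * z))].

Definition is_semifield (R : comPzSemiRingType) : Prop :=
  forall x : R, x <> 0 -> exists y : R, x * y = 1.

Definition is_pos_total_aura (R : comPzSemiRingType) (le : R -> R -> Prop) : Prop :=
  [/\ is_halo le, is_semifield R,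
      (forall x y, le x y \/ le y x) &
      lt_of le 0 1].

Definition tempered_growth (R : comPzSemiRingType) (le : R -> R -> Prop) : Prop :=
  forall (P : {poly nat}) (x : R), P != 0 ->
    (forall n : nat, le (x ^+ n) ((P.[n])%:R)) -> le x 1.

Definition is_gen_seminorm (A : comPzRingType) (R : comPzSemiRingType)
    (le : R -> R -> Prop) (nrm : A -> R) : Prop :=
  [/\ nrm 0 = 0, nrm 1 = 1,
      (forall a b, le (nrm (a + b)) (nrm a + nrm b)) &
      (forall a b, le (nrm (a * b)) (nrm a * nrm b))].

Definition is_multiplicative (A : comPzRingType) (R : comPzSemiRingType)
    (nrm : A -> R) : Prop :=
  forall a b, nrm (a * b) = nrm a * nrm b.

Definition ball_of (A : comPzRingType) (R : comPzSemiRingType)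
    (le : R -> R -> Prop) (nrm : A -> R) (x a : A) : A -> Prop :=
  fun z => lt_of le (nrm (z - x)) (nrm a).

Definition has_tiny_balls (A : comPzRingType) (R : comPzSemiRingType)
    (le : R -> R -> Prop) (nrm : A -> R) : Prop :=
  forall a : A, lt_of le 0 (nrm a) ->
  [/\ (exists a' : A, lt_of le 0 (nrm a') /\
         forall z w, ball_of le nrm 0 a' z -> ball_of le nrm 0 a' w ->
                     ball_of le nrm 0 a (z + w)),
      (forall x : A, exists c : A, lt_of le 0 (nrm c) /\
         forall z, ball_of le nrm 0 c z -> ball_of le nrm 0 a (x * z)),
      (exists a' : A, lt_of le 0 (nrm a') /\
         forall z w, ball_of le nrm 0 a' z -> ball_of le nrm 0 a' w ->
                     ball_of le nrm 0 a (z * w)) &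
      (exists a' : A, lt_of le 0 (nrm a') /\
         forall z, ball_of le nrm 0 a' z -> ball_of le nrm 0 a (- z))].

From mathcomp Require Import all_boot all_order all_algebra.
From Stdlib Require Import Classical.
Import GRing.Theory.
Local Open Scope ring_scope.

(* Each clause is witnessed by rescaling the given radius by an element of K.
   Multiplicativity makes |.| a group morphism from K^* into the positive part
   of the semifield R, so |-1| = 1 and radii can be divided by |x|.  For sums,
   either the ball B(0,|a|) is reduced to 0, or it contains some z <> 0 and
   d := z/a satisfies 0 < |d| < 1; tempered growth then forbids
   1 <= 2|d|^n for all n (compare |d|^-n with the constant polynomial 2),
   so e := d^n has 2|e| < 1 and B(0,|e a|) + B(0,|e a|) lies in B(0,|a|). *)

Section Aura.

Variables (R : comPzSemiRingType) (le : R -> R -> Prop).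
Hypothesis aura : is_pos_total_aura le.

Local Notation lt := (lt_of le).

Lemma aura_le_refl x : le x x.
Proof. by case: aura => [[refl _ _ _ _] _ _ _]. Qed.

Lemma aura_le_anti {x y} : le x y -> le y x -> x = y.
Proof. by case: aura => [[_ anti _ _ _] _ _ _]; apply: anti. Qed.

Lemma aura_le_trans {x y z} : le x y -> le y z -> le x z.
Proof. by case: aura => [[_ _ trans _ _] _ _ _]; apply: trans. Qed.

Lemma aura_leD2r {x y} z : le x y -> le (x + z) (y + z).
Proof. by case: aura => [[_ _ _ leD _] _ _ _]; apply: leD. Qed.

Lemma aura_leM2r {x y} z : le x y -> le (x * z) (y * z).
Proof. by case: aura => [[_ _ _ _ leM] _ _ _]; apply: leM. Qed.

Lemma aura_le_total x y : le x y \/ le y x.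
Proof. by case: aura. Qed.

Lemma aura_lt01 : lt 0 1.
Proof. by case: aura. Qed.

Lemma aura_ge0 x : le 0 x.
Proof. by have := aura_leM2r x (aura_lt01.1); rewrite mul0r mul1r. Qed.

Lemma aura_lt_le_trans {x y z} : lt x y -> le y z -> lt x z.
Proof.
move=> [lexy neqxy] leyz; split; first exact: aura_le_trans leyz.
by move=> exz; subst z; apply: neqxy; apply: aura_le_anti.
Qed.

Lemma aura_le_lt_trans {x y z} : le x y -> lt y z -> lt x z.
Proof.
move=> lexy [leyz neqyz]; split; first exact: aura_le_trans leyz.
by move=> exz; subst z; apply: neqyz; apply: aura_le_anti.
Qed.

Lemma aura_leD {x y u v} : le x y -> le u v -> le (x + u) (y + v).
Proof.
move=> lexy leuv; apply: aura_le_trans (aura_leD2r u lexy) _.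
by rewrite ![y + _]addrC; apply: aura_leD2r.
Qed.

Lemma aura_ltM2r {x y z} : lt x y -> lt 0 z -> lt (x * z) (y * z).
Proof.
move=> [lexy neqxy] [_ nz0]; split; first exact: aura_leM2r.
have [w zw1] : exists w, z * w = 1 by case: aura => _ semifield _ _; apply/semifield/nesym.
by move=> exyz; apply: neqxy; rewrite -[x]mulr1 -[y]mulr1 -zw1 !mulrA exyz.
Qed.

Lemma aura_nlt_le x y : ~ lt x y -> le y x.
Proof.
move=> nltxy; case: (aura_le_total x y) => // lexy.
by case: (classic (x = y)) => [->|neqxy]; [apply: aura_le_refl | case: nltxy].
Qed.

Lemma aura_sqr_eq1 (x : R) : x * x = 1 -> x = 1.
Proof.
move=> xx1; case: (aura_le_total x 1) => lex1;
  have := aura_leM2r x lex1; rewrite xx1 mul1r => lex1';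
  exact: aura_le_anti.
Qed.

Lemma tempered_small_power {x} : tempered_growth le ->
  lt 0 x -> lt x 1 -> exists n, lt (2 * x ^+ n) 1.
Proof.
move=> temp [_ nx0] [lex1 nx1]; apply: NNPP => nosmall.
have ge1 n : le 1 (2 * x ^+ n).
  by apply: aura_nlt_le => small; apply: nosmall; exists n.
have [y xy1] : exists y, x * y = 1 by case: aura => _ semifield _ _; apply/semifield/nesym.
have ley1 : le y 1.
  apply: (temp 2%:P); first by rewrite polyC_eq0.
  move=> n; rewrite hornerC.
  have := aura_leM2r (y ^+ n) (ge1 n).
  by rewrite mul1r -mulrA -exprMn xy1 expr1n mulr1.
have := aura_leM2r x ley1; rewrite mulrC xy1 mul1r => le1x.
by apply: nx1; apply: aura_le_anti.
Qed.

Section MultiplicativeNorm.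

Variables (K : fieldType) (nrm : K -> R).
Hypotheses (seminorm : is_gen_seminorm le nrm) (mult : is_multiplicative nrm).

Lemma nrm0 : nrm 0 = 0. Proof. by case: seminorm. Qed.

Lemma nrm1 : nrm 1 = 1. Proof. by case: seminorm. Qed.

Lemma nrm_triangle z w : le (nrm (z + w)) (nrm z + nrm w).
Proof. by case: seminorm. Qed.

Lemma nrm_mulV {k} : k != 0 -> nrm k * nrm k^-1 = 1.
Proof. by move=> nzk; rewrite -mult mulfV // nrm1. Qed.

Lemma nrm_gt0 {k} : k != 0 -> lt 0 (nrm k).
Proof.
move=> nzk; split; first exact: aura_ge0.
move=> nk0; have := nrm_mulV nzk; rewrite -nk0 mul0r => e01.
by case: aura_lt01.
Qed.

Lemma nrm_gt0_neq0 {k} : lt 0 (nrm k) -> k != 0.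
Proof. by move=> [_ nk0]; apply/eqP => k0; rewrite k0 nrm0 in nk0. Qed.

Lemma nrmN z : nrm (- z) = nrm z.
Proof.
have nN1 : nrm (-1) = 1 by apply: aura_sqr_eq1; rewrite -mult mulrNN mulr1 nrm1.
by rewrite -mulN1r mult nN1 mul1r.
Qed.

Lemma nrmX k n : nrm (k ^+ n) = nrm k ^+ n.
Proof. by elim: n => [|n IHn]; rewrite ?expr0 ?nrm1 // !exprS mult IHn. Qed.

Lemma ball0E a z : ball_of le nrm 0 a z = lt (nrm z) (nrm a).
Proof. by rewrite /ball_of subr0. Qed.

Lemma tempered_exists_small_double {d} : tempered_growth le ->
  d != 0 -> lt (nrm d) 1 -> exists e, e != 0 /\ lt (2 * nrm e) 1.
Proof.
move=> temp nzd ltd1; have [n small] := tempered_small_power temp (nrm_gt0 nzd) ltd1.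
by exists (d ^+ n); rewrite expf_neq0 // nrmX.
Qed.

Variable a : K.
Hypothesis a_gt0 : lt 0 (nrm a).

Let nza : a != 0 := nrm_gt0_neq0 a_gt0.

Lemma tiny_ball_add : tempered_growth le ->
  exists a', lt 0 (nrm a') /\ forall z w, ball_of le nrm 0 a' z ->
    ball_of le nrm 0 a' w -> ball_of le nrm 0 a (z + w).
Proof.
move=> temp.
case: (classic (exists z, z != 0 /\ lt (nrm z) (nrm a))) => [[z [nzz ltza]]|ball_trivial].
- have ltd1 : lt (nrm (z / a)) 1.
    by have := aura_ltM2r ltza (nrm_gt0 (invr_neq0 nza)); rewrite (nrm_mulV nza) mult.
  have nzd : z / a != 0 by rewrite mulf_neq0 // invr_neq0.
  have [e [nze small]] := tempered_exists_small_double temp nzd ltd1.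
  exists (e * a); split; first by apply: nrm_gt0; rewrite mulf_neq0.
  move=> u v; rewrite !ball0E => [[leu _] [lev _]].
  apply: aura_le_lt_trans (nrm_triangle u v) _.
  apply: aura_le_lt_trans (aura_leD leu lev) _.
  have -> : nrm (e * a) + nrm (e * a) = 2 * nrm e * nrm a.
    by rewrite mult -mulrA mulr_natl mulr2n.
  by have := aura_ltM2r small a_gt0; rewrite mul1r.
- have ball_eq0 z : lt (nrm z) (nrm a) -> z = 0.
    by move=> ltza; apply: NNPP => nzz; apply: ball_trivial; exists z; split => //; apply/eqP.
  exists a; split => // z w; rewrite !ball0E => /ball_eq0 -> /ball_eq0 ->.
  by rewrite addr0 nrm0.
Qed.

Lemma tiny_ball_scale x :
  exists c, lt 0 (nrm c) /\ forall z, ball_of le nrm 0 c z -> ball_of le nrm 0 a (x * z).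
Proof.
have [->|nzx] := eqVneq x 0.
  by exists a; split => // z _; rewrite ball0E mul0r nrm0.
exists (a / x); split; first by apply: nrm_gt0; rewrite mulf_neq0 // invr_neq0.
move=> z; rewrite !ball0E => ltz.
have := aura_ltM2r ltz (nrm_gt0 nzx).
by rewrite (mult a) -mulrA [nrm x^-1 * _]mulrC (nrm_mulV nzx) mulr1 mult mulrC.
Qed.

Lemma tiny_ball_mul :
  exists a', lt 0 (nrm a') /\ forall z w, ball_of le nrm 0 a' z ->
    ball_of le nrm 0 a' w -> ball_of le nrm 0 a (z * w).
Proof.
case: (aura_le_total (nrm a) 1) => lea1.
- exists a; split => // z w; rewrite !ball0E mult => [[lez _] ltw].
  apply: aura_le_lt_trans (aura_leM2r (nrm w) lez) _.
  rewrite mulrC; apply: aura_lt_le_trans (aura_ltM2r ltw a_gt0) _.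
  by have := aura_leM2r (nrm a) lea1; rewrite mul1r.
- exists 1; split; first by rewrite nrm1; apply: aura_lt01.
  move=> z w; rewrite !ball0E nrm1 mult => [[lez _] ltw].
  apply: aura_le_lt_trans (aura_leM2r (nrm w) lez) _.
  by rewrite mul1r; apply: aura_lt_le_trans lea1.
Qed.

Lemma tiny_ball_opp :
  exists a', lt 0 (nrm a') /\ forall z, ball_of le nrm 0 a' z -> ball_of le nrm 0 a (- z).
Proof. by exists a; split => // z; rewrite !ball0E nrmN. Qed.

End MultiplicativeNorm.

End Aura.

Theorem corollary4p8 (K : fieldType) (R : comPzSemiRingType)
    (le : R -> R -> Prop) (nrm : K -> R) :
  is_pos_total_aura le ->
  tempered_growth le ->
  is_gen_seminorm le nrm ->
  is_multiplicative nrm ->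
  has_tiny_balls le nrm.
Proof.
move=> aura temp seminorm mult a a_gt0; split.
- exact: tiny_ball_add.
- exact: tiny_ball_scale.
- exact: tiny_ball_mul.
- exact: tiny_ball_opp.
Qed.
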